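(* Let $(M,\circ,\mathrm{OR})$ be a free $\mathbb{D}$-module of rank 3 with scalar product and orientation, and let $x,y,z\in M\setminus\epsilon M$ satisfy $x+y+z=0$. Then $$\alpha_{xy}+\alpha_{yz}+\alpha_{zx}=\pi.$$
   Context: $\mathbb{D}=\{a+\epsilon b: a,b\in\mathbb{R}\}$, $\epsilon^2=0$, $\mathfrak{Re}(a+\epsilon b)=a$; real-analytic functions are extended by $f(a+\epsilon b)=f(a)+\epsilon bf'(a)$. Scalar product: symmetric $\mathbb{D}$-bilinear $\circ:M\times M\to\mathbb{D}$ with $\mathfrak{Re}(x\circ x)\ge0$, equality iff $x\in\epsilon M$; orientation: one of the two classes of ordered bases under $\{b'_j=A_{jk}b_k\}\sim\{b_k\}$ iff $\det\mathfrak{Re}(A)>0$. For $x\notin\epsilon M$, $|x|:=\sqrt{x\circ x}$ (positive real part). For $x,y\in M\setminus\epsilon M$ the dual angle $\Theta_{xy}$ is the unique dual number in $\{0\}\cup((0,\pi)+\epsilon\mathbb{R})\cup\{\pi\}$ with $\cos\Theta_{xy}=\frac{x\circ y}{|x|\,|y|}$, and $\alpha_{xy}:=\pi-\Theta_{xy}$. *)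

From HB Require Import structures.
From mathcomp Require Import all_boot all_order all_algebra.
From mathcomp Require Import all_classical all_reals all_analysis.
From mathcomp Require Import ring.
From Stdlib Require Import ClassicalEpsilon.
Set Implicit Arguments. Unset Strict Implicit. Unset Printing Implicit Defensive.
Import Order.TTheory GRing.Theory Num.Theory.
Local Open Scope ring_scope.

(* Dual numbers a + eps b over a real field, represented as pairs (a, b). *)
Definition dual (R : Type) : Type := (R * R)%type.

Section DualRing.
Variable R : realType.
HB.instance Definition _ := GRing.Zmodule.on (dual R).

Definition dmk (a b : R) : dual R := (a, b).
Definition re (x : dual R) : R := x.1.
Definition du (x : dual R) : R := x.2.
Definition done : dual R := (1, 0).
Definition deps : dual R := (0, 1).
Definition dmul (x y : dual R) : dual R := (x.1 * y.1, x.1 * y.2 + x.2 * y.1).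

Lemma dmulA : associative dmul.
Proof. by move=> [a b] [c d] [e f]; rewrite /dmul /=; congr pair; ring. Qed.
Lemma dmulC : commutative dmul.
Proof. by move=> [a b] [c d]; rewrite /dmul /=; congr pair; ring. Qed.
Lemma dmul1 : left_id done dmul.
Proof. by move=> [a b]; rewrite /dmul /=; congr pair; ring. Qed.
Lemma daddE (p q : dual R) : p + q = (p.1 + q.1, p.2 + q.2).
Proof. by case: p; case: q. Qed.
Lemma dmulDl : left_distributive dmul +%R.
Proof.
move=> [a b] [c d] [e f]; rewrite /dmul !daddE /=.
by congr pair; ring.
Qed.
Lemma done_neq0 : done != 0.
Proof. by apply/eqP => -[] /eqP; rewrite oner_eq0. Qed.

HB.instance Definition _ :=
  GRing.Zmodule_isComNzRing.Build (dual R) dmulA dmulC dmul1 dmulDl done_neq0.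

(* Extension of real-analytic functions: f (a + eps b) = f a + eps b f'(a). *)
Definition dcos (x : dual R) : dual R := (cos x.1, - (x.2 * sin x.1)).
Definition dsqrt (x : dual R) : dual R :=
  (Num.sqrt x.1, x.2 / (2 * Num.sqrt x.1)).
Definition dinv (x : dual R) : dual R := (x.1^-1, - (x.2 / x.1 ^+ 2)).
Definition dpi : dual R := (pi, 0).
End DualRing.

Section Module.
Variables (R : realType) (M : lmodType (dual R)).

Definition epsM (x : M) : Prop := exists m : M, x = deps R *: m.

Definition is_basis3 (b : 'I_3 -> M) : Prop :=
  forall x : M, exists! c : 'I_3 -> dual R, x = \sum_(i < 3) c i *: b i.
Definition free_rank3 : Prop := exists b, is_basis3 b.

Definition scalar_product (sp : M -> M -> dual R) : Prop :=
  [/\ forall x y, sp x y = sp y x,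
      forall a x y z, sp (a *: x + y) z = a * sp x z + sp y z,
      forall x, 0 <= re (sp x x) &
      forall x, re (sp x x) = 0 <-> epsM x].

Definition same_orientation (b b' : 'I_3 -> M) : Prop :=
  exists A : 'M[dual R]_3, (forall j, b' j = \sum_(k < 3) A j k *: b k)
                           /\ 0 < \det (map_mx (@re R) A).
Definition orientation (OR : ('I_3 -> M) -> Prop) : Prop :=
  exists b0, is_basis3 b0 /\
    forall b, OR b <-> (is_basis3 b /\ same_orientation b0 b).

Definition dnorm (sp : M -> M -> dual R) (x : M) : dual R := dsqrt (sp x x).

Definition is_dual_angle (sp : M -> M -> dual R) (x y : M) (T : dual R) : Prop :=
  (T = 0 \/ (0 < re T < pi) \/ T = dpi R) /\
  dcos T = sp x y * dinv (dnorm sp x * dnorm sp y).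

Definition dual_angle (sp : M -> M -> dual R) (x y : M) : dual R :=
  epsilon (inhabits 0) (is_dual_angle sp x y).

Definition alpha (sp : M -> M -> dual R) (x y : M) : dual R :=
  dpi R - dual_angle sp x y.
End Module.

From Pilot Require Import Defs.
From HB Require Import structures.
From mathcomp Require Import all_boot all_order all_algebra.
From mathcomp Require Import all_classical all_reals all_analysis.
From mathcomp Require Import ring lra.
From Stdlib Require Import ClassicalEpsilon.
Set Implicit Arguments. Unset Strict Implicit. Unset Printing Implicit Defensive.
Import Order.TTheory GRing.Theory Num.Theory.
Local Open Scope ring_scope.

(* Write c1, c2, c3 for the dual cosines of the angles (x, y), (y, z), (z, x).
   Since x + y + z = 0 the Gram matrix of x, y, z has zero row sums.  Hence its
   determinant vanishes, which after normalisation reads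
   1 + 2 c1 c2 c3 - c1^2 - c2^2 - c3^2 = 0 in D; moreover the real Gram
   determinant Q of two of the vectors does not depend on the pair, and
   1 - ci^2 as well as c2 c3 - c1 equal Q up to positive real factors.
   If Q = 0 every angle is exactly 0 or pi: the identity forces c1 c2 c3 = 1 and,
   some ci being negative, exactly two angles are pi.  If Q > 0 the real angles
   ti lie in (0, pi) and the sign of c2 c3 - c1 turns the real part of the
   identity into cos (t2 + t3) = cos t1, and likewise cos (t1 + t3) = cos t2,
   so t1 + t2 + t3 = 2 pi; the dual part of the identity is its derivative,
   -2 sin t1 sin t2 sin t3 times the sum of the dual parts of the angles, which
   therefore vanishes.  Hence the dual angles sum to 2 pi. *)

Section UnitGramDet.
Variable K : comRingType.
Implicit Types a b c : K.

Definition unit_gram_det a b c := 1 + a * b * c *+ 2 - a ^+ 2 - b ^+ 2 - c ^+ 2.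

Definition gram_det3 (sxx syy szz sxy syz szx : K) :=
  sxx * syy * szz + sxy * syz * szx *+ 2
  - sxx * syz ^+ 2 - syy * szx ^+ 2 - szz * sxy ^+ 2.

Lemma unit_gram_detM a b c (nx ny nz : K) :
  unit_gram_det a b c * (nx * ny * nz) ^+ 2 =
  gram_det3 (nx ^+ 2) (ny ^+ 2) (nz ^+ 2)
            (a * (nx * ny)) (b * (ny * nz)) (c * (nz * nx)).
Proof. by rewrite /unit_gram_det /gram_det3; ring. Qed.

Lemma gram_det3_row_sums0 (sxy syz szx : K) :
  gram_det3 (- (sxy + szx)) (- (syz + sxy)) (- (szx + syz)) sxy syz szx = 0.
Proof. by rewrite /gram_det3; ring. Qed.

Lemma unit_gram_det_sqr a b c :
  unit_gram_det a b c = (1 - b ^+ 2) * (1 - c ^+ 2) - (b * c - a) ^+ 2.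
Proof. by rewrite /unit_gram_det; ring. Qed.

End UnitGramDet.

Lemma rmorph_unit_gram_det (K K' : comRingType) (f : {rmorphism K -> K'}) (a b c : K) :
  f (unit_gram_det a b c) = unit_gram_det (f a) (f b) (f c).
Proof.
by rewrite /unit_gram_det !rmorphB rmorphD rmorph1 rmorphMn !rmorphXn !rmorphM.
Qed.

Section RealAngles.
Variable R : realType.
Implicit Types s t : R.

Lemma cos_sqr_lt1 t : 0 < t < pi -> cos t ^+ 2 < 1.
Proof. by move=> /sin_gt0_pi s_gt0; rewrite -(cos2Dsin2 t) ltrDl exprn_gt0. Qed.

Lemma cos_eq_cases s t : 0 <= s <= pi *+ 2 -> 0 <= t <= pi -> cos s = cos t ->
  s = t \/ s = pi *+ 2 - t.
Proof.
move=> /andP[s_ge0 s_le2pi] t_range cst.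
have [s_le_pi|pi_lt_s] := lerP s pi.
  by left; apply: cos_inj; rewrite // in_itv /= s_ge0.
right; have -> : t = pi *+ 2 - s; last by rewrite opprB addrC subrK.
apply: cos_inj; rewrite ?in_itv //=; first by apply/andP; split; lra.
by rewrite addrC cosD2pi cosN.
Qed.

Lemma cosD_eq_of_unit_gram_det (t1 t2 t3 : R) :
  0 < t2 < pi -> 0 < t3 < pi ->
  unit_gram_det (cos t1) (cos t2) (cos t3) = 0 -> cos t1 <= cos t2 * cos t3 ->
  cos (t2 + t3) = cos t1.
Proof.
move=> /sin_gt0_pi s2 /sin_gt0_pi s3.
rewrite unit_gram_det_sqr -!sin2cos2 -exprMn => /eqP + cos_le.
have s23 : 0 <= sin t2 * sin t3 by rewrite mulr_ge0 ?ltW.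
by rewrite subr_eq0 eqrXn2 ?subr_ge0 // => /eqP sin23; rewrite cosD sin23; ring.
Qed.

Lemma angles_sum_eq_2pi (t1 t2 t3 : R) :
  0 < t1 < pi -> 0 < t2 < pi -> 0 < t3 < pi ->
  cos (t2 + t3) = cos t1 -> cos (t1 + t3) = cos t2 -> t1 + t2 + t3 = pi *+ 2.
Proof.
move=> h1 h2 h3 c1 c2.
have weak s : 0 < s < pi -> 0 <= s <= pi by case/andP=> *; rewrite !ltW.
have weak2 s t : 0 < s < pi -> 0 < t < pi -> 0 <= s + t <= pi *+ 2.
  by move=> /andP[? ?] /andP[? ?]; apply/andP; split; lra.
case: (cos_eq_cases (weak2 _ _ h2 h3) (weak _ h1) c1) => e1;
case: (cos_eq_cases (weak2 _ _ h1 h3) (weak _ h2) c2) => e2;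
move: h1 h2 h3 => /andP[? ?] /andP[? ?] /andP[? ?]; lra.
Qed.

Lemma cos_sub_cos_mul (t1 t2 t3 : R) :
  t1 + t2 + t3 = pi *+ 2 -> cos t2 * cos t3 - cos t1 = sin t2 * sin t3.
Proof.
move=> sum; have -> : t1 = - (t2 + t3) + pi *+ 2 by rewrite -sum; ring.
by rewrite cosD2pi cosN cosD; ring.
Qed.

End RealAngles.

Section DualNumbers.
Variable R : realType.
Implicit Types (p q c T : dual R).

Lemma dual_eq p q : re p = re q -> du p = du q -> p = q.
Proof. by case: p q => [a b] [c d] /= -> ->. Qed.

Fact re_is_zmod_morphism : zmod_morphism (@re R). Proof. by []. Qed.
HB.instance Definition _ :=
  GRing.isZmodMorphism.Build (dual R) R (@re R) re_is_zmod_morphism.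
Fact re_is_monoid_morphism : monoid_morphism (@re R). Proof. by []. Qed.
HB.instance Definition _ :=
  GRing.isMonoidMorphism.Build (dual R) R (@re R) re_is_monoid_morphism.

(* Stated with [re] itself: the generic rmorph lemmas leave the instance name in
   the goal. *)
Lemma re1 : re 1 = 1 :> R. Proof. by []. Qed.
Lemma reD p q : re (p + q) = re p + re q. Proof. by []. Qed.
Lemma reN p : re (- p) = - re p. Proof. by []. Qed.
Lemma reB p q : re (p - q) = re p - re q. Proof. exact: rmorphB. Qed.
Lemma reM p q : re (p * q) = re p * re q. Proof. by []. Qed.
Lemma reX p n : re (p ^+ n) = re p ^+ n. Proof. exact: rmorphXn. Qed.
Lemma duD p q : du (p + q) = du p + du q. Proof. by []. Qed.

Lemma dual_rreg q : re q != 0 -> GRing.rreg q.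
Proof.
case: q => a b /= a0 [p1 p2] [p1' p2'] [/mulIf e1 e2]; rewrite e1 // in e2 *.
by move/addrI/mulIf: e2 => ->.
Qed.

Lemma deps_sqr : deps R ^+ 2 = 0.
Proof. by apply: dual_eq; rewrite /= ?mul0r ?mulr0 ?addr0. Qed.

Lemma dual1E : 1 = (1, 0) :> dual R. Proof. by []. Qed.

Lemma mulVdinv p : re p != 0 -> Defs.dinv p * p = 1.
Proof. by case: p => a b /= a0; rewrite dual1E; apply: dual_eq => /=; field. Qed.

Lemma sqr_dsqrt p : 0 < re p -> dsqrt p ^+ 2 = p.
Proof.
case: p => a b /= a0; have s0 : Num.sqrt a != 0 by rewrite sqrtr_eq0 -ltNge.
by apply: dual_eq; rewrite /= -?expr2 ?sqr_sqrtr ?ltW //; field.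
Qed.

Lemma dcos0 : dcos 0 = 1 :> dual R.
Proof. by rewrite dual1E; apply: dual_eq; rewrite /= ?cos0 // sin0 mulr0 oppr0. Qed.

Lemma dcospi : dcos (dpi R) = -1.
Proof. by apply: dual_eq; rewrite /= ?cospi // sinpi mulr0 oppr0. Qed.

Lemma dual_sqr_eq1 c : c ^+ 2 = 1 -> c = 1 \/ c = -1.
Proof.
case: c => a b; rewrite dual1E => -[a2 ab].
have ab0 : a * b = 0 by move/eqP: ab; rewrite (mulrC b) -mulr2n mulrn_eq0 => /eqP.
have -> : b = 0 by rewrite -[b]mul1r -a2 -mulrA ab0 mulr0.
have : (a - 1) * (a + 1) = 0 by rewrite mulrBl !mulrDr a2; ring.
move/eqP; rewrite mulf_eq0 subr_eq0 addr_eq0 => /orP[]/eqP->; [left|right];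
  by apply: dual_eq; rewrite /= ?oppr0.
Qed.

Lemma dcos_onto c : re c ^+ 2 < 1 -> exists2 T, 0 < re T < pi & dcos T = c.
Proof.
case: c => a b /= a1.
have a_gtN1 : -1 < a by nra.
have a_lt1 : a < 1 by nra.
have t_range : 0 < acos a < pi by rewrite acos_gt0 ?acos_ltpi ?ltW ?a_gtN1 ?a_lt1.
have s0 : sin (acos a) != 0 by rewrite gt_eqF // sin_gt0_pi.
exists (acos a, - b / sin (acos a)) => //.
by apply: dual_eq; rewrite /= ?acosK ?in_itv /= ?ltW //; field.
Qed.

Definition dual_angle_range T := T = 0 \/ (0 < re T < pi) \/ T = dpi R.

Lemma flat_dual_angle T :
  dual_angle_range T -> cos (re T) ^+ 2 = 1 -> T = 0 \/ T = dpi R.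
Proof.
case=> [->|[/cos_sqr_lt1 + c1|->]]; [by left | | by right].
by rewrite c1 ltxx.
Qed.

Lemma proper_dual_angle T :
  dual_angle_range T -> cos (re T) ^+ 2 < 1 -> 0 < re T < pi.
Proof.
by case=> [->|[//|->]]; rewrite ?raddf0 /dpi /= ?cos0 ?cospi ?sqrrN expr1n !ltxx.
Qed.

End DualNumbers.

Section DualAngleSums.
Variable R : realType.
Implicit Types T : dual R.

Lemma dcosE T : dcos T = (cos (re T), - (du T * sin (re T))).
Proof. by []. Qed.

Lemma du_unit_gram_det (a b c : dual R) :
  du (unit_gram_det a b c) =
  ((re b * re c - re a) * du a + (re a * re c - re b) * du b
   + (re a * re b - re c) * du c) *+ 2.
Proof.
by case: a b c => [a1 a2] [b1 b2] [c1 c2]; rewrite /unit_gram_det /=; ring.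
Qed.

Lemma du_unit_gram_det_dcos T1 T2 T3 :
  re T1 + re T2 + re T3 = pi *+ 2 ->
  du (unit_gram_det (dcos T1) (dcos T2) (dcos T3))
  = - (sin (re T1) * sin (re T2) * sin (re T3) *+ 2) * (du T1 + du T2 + du T3).
Proof.
move=> sum; rewrite du_unit_gram_det !dcosE /= cos_sub_cos_mul //.
rewrite (@cos_sub_cos_mul _ (re T2)); last by rewrite -sum; ring.
by rewrite (@cos_sub_cos_mul _ (re T3)); [ring | rewrite -sum; ring].
Qed.

Lemma proper_dual_angles_sum (T1 T2 T3 : dual R) :
  0 < re T1 < pi -> 0 < re T2 < pi -> 0 < re T3 < pi ->
  unit_gram_det (dcos T1) (dcos T2) (dcos T3) = 0 ->
  re (dcos T1) <= re (dcos T2 * dcos T3) ->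
  re (dcos T2) <= re (dcos T1 * dcos T3) ->
  T1 + T2 + T3 = dpi R *+ 2.
Proof.
move=> h1 h2 h3 hdet.
have := congr1 (@re R) hdet; rewrite rmorph_unit_gram_det !rmorphM raddf0 !dcosE /=.
move=> hre le1 le2.
have sum_re : re T1 + re T2 + re T3 = pi *+ 2.
  apply: angles_sum_eq_2pi => //; apply: cosD_eq_of_unit_gram_det => //.
  by rewrite -hre /unit_gram_det; ring.
have sum_du : du T1 + du T2 + du T3 = 0.
  move: (congr1 (@du R) hdet); rewrite du_unit_gram_det_dcos // => /eqP.
  rewrite mulf_eq0 oppr_eq0 mulrn_eq0 /= !mulf_eq0 => /orP[|/eqP //].
  by rewrite !gt_eqF ?sin_gt0_pi.
apply: dual_eq; first by rewrite !raddfD /= sum_re mulr2n.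
by rewrite mulr2n !duD sum_du /= addr0.
Qed.

Lemma flat_dual_angles_sum (T1 T2 T3 : dual R) :
  T1 = 0 \/ T1 = dpi R -> T2 = 0 \/ T2 = dpi R -> T3 = 0 \/ T3 = dpi R ->
  re (unit_gram_det (dcos T1) (dcos T2) (dcos T3)) = 0 ->
  [\/ re (dcos T1) < 0, re (dcos T2) < 0 | re (dcos T3) < 0] ->
  T1 + T2 + T3 = dpi R *+ 2.
Proof.
case=> ->; case=> ->; case=> ->;
  rewrite ?dcos0 ?dcospi rmorph_unit_gram_det ?rmorph1 ?rmorphN1 /unit_gram_det;
  rewrite ?add0r ?addr0 ?mulr2n // => hdet hneg; exfalso; case: hneg; lra.
Qed.

End DualAngleSums.

Section ScalarProduct.
Variables (R : realType) (M : lmodType (dual R)) (sp : M -> M -> dual R).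
Hypothesis hsp : scalar_product sp.
Implicit Types (u v w x y z : M) (a : dual R).

Lemma spC u v : sp u v = sp v u. Proof. by case: hsp. Qed.

Lemma spDZl a u v w : sp (a *: u + v) w = a * sp u w + sp v w.
Proof. by case: hsp. Qed.

Lemma sp0l w : sp 0 w = 0.
Proof.
by have := spDZl 1 0 0 w; rewrite scaler0 addr0 mul1r -{1}[sp 0 w]addr0 => /addrI <-.
Qed.

Lemma spDl u v w : sp (u + v) w = sp u w + sp v w.
Proof. by rewrite -{1}[u]scale1r spDZl mul1r. Qed.

Lemma spZl a u w : sp (a *: u) w = a * sp u w.
Proof. by rewrite -[a *: u]addr0 spDZl sp0l addr0. Qed.

Lemma sp0r w : sp w 0 = 0. Proof. by rewrite spC sp0l. Qed.
Lemma spDr u v w : sp w (u + v) = sp w u + sp w v.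
Proof. by rewrite !(spC w) spDl. Qed.
Lemma spZr a u w : sp w (a *: u) = a * sp w u.
Proof. by rewrite !(spC w) spZl. Qed.

Lemma re_sp_gt0 u : ~ epsM u -> 0 < re (sp u u).
Proof.
case: hsp => _ _ sp_ge0 sp_eq0 hu; rewrite lt_neqAle sp_ge0 andbT eq_sym.
by apply/eqP => /sp_eq0.
Qed.

Definition gram2 u v := sp u u * sp v v - sp u v ^+ 2.

Lemma gram2_addZr u v a : gram2 u (v + a *: u) = gram2 u v.
Proof. by rewrite /gram2 !(spDl, spDr, spZl, spZr) (spC v u); ring. Qed.

Lemma gram2_Zr u v a : gram2 u (a *: v) = a ^+ 2 * gram2 u v.
Proof. by rewrite /gram2 !(spZl, spZr); ring. Qed.

Lemma re_sp_orth u v : ~ epsM u -> exists a, re (sp u (v + a *: u)) = 0.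
Proof.
move=> /re_sp_gt0 hu; exists (dmk (- (re (sp u v) / re (sp u u))) 0).
by rewrite spDr spZr /=; field; rewrite gt_eqF.
Qed.

Lemma re_gram2_orth u v :
  re (sp u v) = 0 -> re (gram2 u v) = re (sp u u) * re (sp v v).
Proof. by move=> h; rewrite /gram2 reB reX !reM h expr0n subr0. Qed.

Lemma re_gram2_ge0 u v : ~ epsM u -> 0 <= re (gram2 u v).
Proof.
move=> hu; have [a /re_gram2_orth] := re_sp_orth v hu.
rewrite gram2_addZr => ->; case: hsp => _ _ sp_ge0 _.
by rewrite mulr_ge0.
Qed.

(* The equality case of Cauchy-Schwarz holds in D itself: a suitable v + a u
   lies in eps M, and eps^2 = 0. *)
Lemma gram2_eq0 u v : ~ epsM u -> re (gram2 u v) = 0 -> gram2 u v = 0.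
Proof.
move=> hu; have [a /re_gram2_orth] := re_sp_orth v hu.
rewrite -(gram2_addZr u v a) => -> /eqP; rewrite mulf_eq0 gt_eqF ?re_sp_gt0 //=.
case: hsp => _ _ _ sp_eq0 /eqP/sp_eq0[m ->].
by rewrite gram2_Zr deps_sqr mul0r.
Qed.

Lemma re_dnorm_gt0 u : ~ epsM u -> 0 < re (dnorm sp u).
Proof. by move/re_sp_gt0; rewrite /= sqrtr_gt0. Qed.

Lemma re_dnormM_gt0 u v :
  ~ epsM u -> ~ epsM v -> 0 < re (dnorm sp u * dnorm sp v).
Proof. by move=> hu hv; rewrite reM mulr_gt0 // re_dnorm_gt0. Qed.

Lemma dnorm_sqr u : ~ epsM u -> dnorm sp u ^+ 2 = sp u u.
Proof. by move/re_sp_gt0/sqr_dsqrt. Qed.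

Definition dcosine u v := sp u v * Defs.dinv (dnorm sp u * dnorm sp v).

Lemma dcosineM u v :
  ~ epsM u -> ~ epsM v -> dcosine u v * (dnorm sp u * dnorm sp v) = sp u v.
Proof.
by move=> hu hv; rewrite -mulrA mulVdinv ?mulr1 // lt0r_neq0 ?re_dnormM_gt0.
Qed.

Lemma one_sub_dcosine_sqr u v : ~ epsM u -> ~ epsM v ->
  (1 - dcosine u v ^+ 2) * (dnorm sp u * dnorm sp v) ^+ 2 = gram2 u v.
Proof.
move=> hu hv; rewrite /gram2 -(dcosineM hu hv) -(dnorm_sqr hu) -(dnorm_sqr hv).
by ring.
Qed.

Lemma dual_angle_exists u v : ~ epsM u -> ~ epsM v ->
  exists T, is_dual_angle sp u v T.
Proof.
move=> hu hv; rewrite /is_dual_angle -/(dcosine u v).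
have nn_gt0 : 0 < re ((dnorm sp u * dnorm sp v) ^+ 2).
  by rewrite reX exprn_gt0 // re_dnormM_gt0.
have := one_sub_dcosine_sqr hu hv; move: (dcosine u v) => c hc.
have [c_lt1|c_ge1] := ltP (re c ^+ 2) 1.
  by have [T ? <-] := dcos_onto c_lt1; exists T; split => //; right; left.
have /gram2_eq0 : re (gram2 u v) = 0.
  apply/le_anti; rewrite re_gram2_ge0 // andbT -hc reM reB re1 reX.
  by rewrite pmulr_lle0 // subr_le0.
move=> /(_ hu) gram0.
have c2 : c ^+ 2 = 1.
  apply/eqP; rewrite eq_sym -subr_eq0; apply/eqP.
  by apply: (dual_rreg (lt0r_neq0 nn_gt0)); rewrite mul0r hc.
case: (dual_sqr_eq1 c2) => ->; [exists 0 | exists (dpi R)].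
  by split; [left | rewrite dcos0].
by split; [right; right | rewrite dcospi].
Qed.

Lemma dual_angleP u v : ~ epsM u -> ~ epsM v ->
  dual_angle_range (dual_angle sp u v) /\ dcos (dual_angle sp u v) = dcosine u v.
Proof.
by move=> hu hv; exact: (epsilon_spec _ _ (dual_angle_exists hu hv)).
Qed.

Lemma one_sub_cos_dual_angle_sqr u v : ~ epsM u -> ~ epsM v ->
  (1 - cos (re (dual_angle sp u v)) ^+ 2) * re (dnorm sp u * dnorm sp v) ^+ 2
  = re (gram2 u v).
Proof.
move=> hu hv; have [_ cT] := dual_angleP hu hv.
by rewrite -(one_sub_dcosine_sqr hu hv) -cT !(reM, reB, re1, reX).
Qed.

Lemma dual_angle_flat u v : ~ epsM u -> ~ epsM v -> re (gram2 u v) = 0 ->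
  dual_angle sp u v = 0 \/ dual_angle sp u v = dpi R.
Proof.
move=> hu hv Q0; have [hT _] := dual_angleP hu hv; apply: flat_dual_angle hT _.
move: (one_sub_cos_dual_angle_sqr hu hv); rewrite Q0 => /eqP.
rewrite mulf_eq0 expf_eq0 /= (gt_eqF (re_dnormM_gt0 hu hv)) orbF.
by rewrite subr_eq0 eq_sym => /eqP.
Qed.

Lemma dual_angle_proper u v : ~ epsM u -> ~ epsM v -> 0 < re (gram2 u v) ->
  0 < re (dual_angle sp u v) < pi.
Proof.
move=> hu hv Q_gt0; have [hT _] := dual_angleP hu hv; apply: proper_dual_angle hT _.
move: Q_gt0; rewrite -(one_sub_cos_dual_angle_sqr hu hv) pmulr_lgt0 ?subr_gt0 //.
by rewrite exprn_gt0 // re_dnormM_gt0.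
Qed.

Lemma triangle_rot x y z : x + y + z = 0 -> y + z + x = 0.
Proof. by move=> <-; rewrite addrC addrA. Qed.

Lemma sp_self_triangle x y z : x + y + z = 0 -> sp x x = - (sp x y + sp z x).
Proof.
move=> hsum; have := sp0r x; rewrite -hsum !spDr (spC x z) => /eqP.
by rewrite -addrA addr_eq0 => /eqP.
Qed.

Lemma gram2_triangle_rot x y z : x + y + z = 0 -> gram2 x y = gram2 y z.
Proof.
move=> hsum; have hsum' := triangle_rot hsum; have hsum'' := triangle_rot hsum'.
rewrite /gram2 (sp_self_triangle hsum) (sp_self_triangle hsum').
by rewrite (sp_self_triangle hsum''); ring.
Qed.

Section Triangle.
Variables x y z : M.
Hypotheses (hx : ~ epsM x) (hy : ~ epsM y) (hz : ~ epsM z) (hsum : x + y + z = 0).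

Let hsum' := triangle_rot hsum.
Let hsum'' := triangle_rot hsum'.

Lemma dcosine_cross_triangle :
  (dcosine y z * dcosine z x - dcosine x y) * (dnorm sp x * dnorm sp y * dnorm sp z ^+ 2)
  = gram2 x y.
Proof.
have -> : (dcosine y z * dcosine z x - dcosine x y) * (dnorm sp x * dnorm sp y * dnorm sp z ^+ 2)
  = dcosine y z * (dnorm sp y * dnorm sp z) * (dcosine z x * (dnorm sp z * dnorm sp x))
    - dcosine x y * (dnorm sp x * dnorm sp y) * dnorm sp z ^+ 2 by ring.
rewrite !dcosineM // dnorm_sqr // /gram2 (sp_self_triangle hsum).
by rewrite (sp_self_triangle hsum') (sp_self_triangle hsum''); ring.
Qed.

Lemma unit_gram_det_triangle :
  unit_gram_det (dcosine x y) (dcosine y z) (dcosine z x) = 0.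
Proof.
have N_gt0 : 0 < re ((dnorm sp x * dnorm sp y * dnorm sp z) ^+ 2).
  by rewrite reX !reM exprn_gt0 // !mulr_gt0 // re_dnorm_gt0.
apply: (dual_rreg (lt0r_neq0 N_gt0)); rewrite mul0r unit_gram_detM.
rewrite !dnorm_sqr // !dcosineM // (sp_self_triangle hsum).
by rewrite (sp_self_triangle hsum') (sp_self_triangle hsum'') gram_det3_row_sums0.
Qed.

Lemma dcosine_triangle_neg :
  [\/ re (dcosine x y) < 0, re (dcosine y z) < 0 | re (dcosine z x) < 0].
Proof.
have neg u v : ~ epsM u -> ~ epsM v -> re (sp u v) < 0 -> re (dcosine u v) < 0.
  by move=> hu hv; rewrite -(dcosineM hu hv) reM pmulr_llt0 // re_dnormM_gt0.
have := re_sp_gt0 hx; have := re_sp_gt0 hy; have := re_sp_gt0 hz.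
rewrite (sp_self_triangle hsum) (sp_self_triangle hsum') (sp_self_triangle hsum'').
rewrite !reN !reD => *.
have [/(neg _ _ hx hy) ?|?] := ltP (re (sp x y)) 0; first by constructor 1.
have [/(neg _ _ hy hz) ?|?] := ltP (re (sp y z)) 0; first by constructor 2.
by constructor 3; apply: neg => //; lra.
Qed.

Lemma re_dcosine_lt_triangle :
  0 < re (gram2 x y) -> re (dcosine x y) < re (dcosine y z * dcosine z x).
Proof.
rewrite -dcosine_cross_triangle reM pmulr_lgt0 ?reB ?subr_gt0 //.
by rewrite reM mulr_gt0 ?re_dnormM_gt0 // reX exprn_gt0 // re_dnorm_gt0.
Qed.

End Triangle.

Lemma dual_angles_triangle_sum x y z :
  ~ epsM x -> ~ epsM y -> ~ epsM z -> x + y + z = 0 ->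
  dual_angle sp x y + dual_angle sp y z + dual_angle sp z x = dpi R *+ 2.
Proof.
move=> hx hy hz hsum; have hsum' := triangle_rot hsum.
have Qyz : gram2 y z = gram2 x y by rewrite (gram2_triangle_rot hsum).
have Qzx : gram2 z x = gram2 x y by rewrite -(gram2_triangle_rot hsum') Qyz.
have [_ c1] := dual_angleP hx hy; have [_ c2] := dual_angleP hy hz.
have [_ c3] := dual_angleP hz hx.
have := re_gram2_ge0 y hx; rewrite le_eqVlt => /orP[/eqP/esym Q0|Q_gt0].
  apply: flat_dual_angles_sum; rewrite ?c1 ?c2 ?c3 ?unit_gram_det_triangle //.
  - exact: dual_angle_flat.
  - by apply: dual_angle_flat; rewrite ?Qyz.
  - by apply: dual_angle_flat; rewrite ?Qzx.
  - exact: dcosine_triangle_neg.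
apply: proper_dual_angles_sum; rewrite ?c1 ?c2 ?c3 ?unit_gram_det_triangle //.
- exact: dual_angle_proper.
- by apply: dual_angle_proper; rewrite ?Qyz.
- by apply: dual_angle_proper; rewrite ?Qzx.
- by rewrite ltW ?re_dcosine_lt_triangle.
- by rewrite mulrC ltW ?re_dcosine_lt_triangle ?Qyz.
Qed.

End ScalarProduct.

Theorem proposition20 (R : realType) (M : lmodType (dual R))
  (sp : M -> M -> dual R) (OR : ('I_3 -> M) -> Prop)
  (hfree : free_rank3 M) (hsp : scalar_product sp) (hOR : orientation OR)
  (x y z : M) (hx : ~ epsM x) (hy : ~ epsM y) (hz : ~ epsM z)
  (hsum : x + y + z = 0) :
  alpha sp x y + alpha sp y z + alpha sp z x = dpi R.
Proof.
have angles := dual_angles_triangle_sum hsp hx hy hz hsum.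
transitivity (dpi R *+ 3 - (dual_angle sp x y + dual_angle sp y z + dual_angle sp z x)).
  by rewrite /alpha; ring.
by rewrite angles; ring.
Qed.
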